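(* Let $A$ satisfy the spectral assumption, $B\in\mathbb{R}^{n\times k}$, and suppose $E_{\mathrm u}^\perp$ and $E_{\mathrm s}$ are $\xi$-close with $\xi\in(0,1)$. Let $\gamma>0$, $\gamma_+>1$, and let $x\in\mathbb{R}^n$ satisfy $\|R_1x\|/\|R_2x\|>\gamma_+$. Let $u\in\mathbb{R}^k$ with $\|u\|\le\alpha\|x\|$, where $$\alpha<\frac{\frac{\gamma_+}{\gamma_++1}\sigma_{\min}(M_1)-\frac{\gamma}{\gamma_+-1}\frac{1}{1-\xi}\|A\|}{\big(1+\frac{\sqrt{2\xi}}{1-\xi}+\frac{\gamma}{1-\xi}\big)\|B\|}.$$ Then $x'=Ax+Bu$ satisfies $\|R_1x'\|/\|R_2x'\|>\gamma$.
   Context: Spectral assumption: $A\in\mathbb{R}^{n\times n}$ diagonalizable with eigenvalues $|\lambda_1|>\cdots\ge|\lambda_k|>1>|\lambda_{k+1}|\ge\cdots\ge|\lambda_n|$. $E_{\mathrm u}$ / $E_{\mathrm s}$: real invariant subspaces associated with $\lambda_1..\lambda_k$ / $\lambda_{k+1}..\lambda_n$. $P_1=Q_1$ has orthonormal columns spanning $E_{\mathrm u}$, $P_2$ orthonormal columns spanning $E_{\mathrm u}^\perp$, $Q_2$ orthonormal columns spanning $E_{\mathrm s}$; $M_1=P_1^\top AP_1$; $Q=[Q_1\ Q_2]$, $Q^{-1}=\begin{bmatrix}R_1\\R_2\end{bmatrix}$. $\xi$-close: $\sigma_{\min}(P_2^\top Q_2)>1-\xi$. $\sigma_{\min}$ is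 the smallest singular value, $\|\cdot\|$ the spectral/Euclidean norm. *)

From HB Require Import structures.
From mathcomp Require Import all_boot all_order all_algebra.
From mathcomp Require Import complex.
From mathcomp Require Import classical_sets reals.
Set Implicit Arguments. Unset Strict Implicit. Unset Printing Implicit Defensive.
Import Order.TTheory GRing.Theory Num.Theory.
Local Open Scope ring_scope.
Local Open Scope classical_set_scope.

Definition enorm (R : realType) (p : nat) (v : 'cV[R]_p) : R :=
  Num.sqrt (\sum_(i < p) v i 0 ^+ 2).

Definition specnorm (R : realType) (p q : nat) (M : 'M[R]_(p, q)) : R :=
  sup [set enorm (M *m v) | v in [set v : 'cV[R]_q | enorm v = 1]].

Definition sigma_min (R : realType) (p : nat) (M : 'M[R]_p) : R :=
  inf [set enorm (M *m v) | v in [set v : 'cV[R]_p | enorm v = 1]].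

Definition colspan (F : fieldType) (p q : nat) (M : 'M[F]_(p, q)) (v : 'cV[F]_p) : Prop :=
  exists c : 'cV[F]_q, v = M *m c.

Definition orthonormal_cols (R : realType) (p q : nat) (M : 'M[R]_(p, q)) : Prop :=
  M^T *m M = 1%:M.

Definition cplx (R : realType) (p q : nat) (M : 'M[R]_(p, q)) : 'M[R[i]]_(p, q) :=
  map_mx (fun r : R => (r%:C)%C) M.

From HB Require Import structures.
From mathcomp Require Import all_boot all_order all_algebra.
From mathcomp Require Import complex.
From mathcomp Require Import classical_sets reals.
From mathcomp Require Import ring lra.
Import Order.TTheory GRing.Theory Num.Theory.
Local Open Scope ring_scope.

(* Write y = Q1 a + Q2 b, where a = R1 y and b = R2 y are the oblique coordinates
   for the splitting E_u + E_s.  As E_u and E_s are A-invariant, A acts block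
   diagonally: R1 (A y) = M1 a and R2 (A y) = M2 b with M2 = Q2^T A Q2, so
   |M2 b| <= |A| |b|.  Closeness of E_u^perp and E_s controls the oblique
   projections: from P2^T y = P2^T Q2 b we get |b| <= |y| / (1 - xi), and from
   |Q1^T Q2 b|^2 = |b|^2 - |P2^T Q2 b|^2 <= 2 xi |b|^2 we get
   |a| <= (1 + sqrt(2 xi) / (1 - xi)) |y|.  For y = x' this bounds |R1 x'| below by
   sigma_min(M1) |a| - c |B| |u| and |R2 x'| above by |A| |b| + c' |B| |u|.  The cone
   condition |a| > gamma_+ |b| gives gamma_+ |x| <= (gamma_+ + 1) |a| and
   (gamma_+ - 1) |b| <= |x|; with |u| <= alpha |x|, the bound on alpha finishes
   the estimate. *)

Section EuclideanNorm.
Set Implicit Arguments. Unset Strict Implicit.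
Variable R : realType.
Implicit Types (p q : nat).

Definition dotmx p (v w : 'cV[R]_p) : R := (v^T *m w) 0 0.

Lemma dotmxE p (v w : 'cV[R]_p) : dotmx v w = \sum_(i < p) v i 0 * w i 0.
Proof. by rewrite /dotmx mxE; apply: eq_bigr => i _; rewrite mxE. Qed.

Lemma dotmxC p (v w : 'cV[R]_p) : dotmx v w = dotmx w v.
Proof. by rewrite !dotmxE; apply: eq_bigr => i _; rewrite mulrC. Qed.

Lemma dotmxDl p (u v w : 'cV[R]_p) : dotmx (u + v) w = dotmx u w + dotmx v w.
Proof. by rewrite /dotmx linearD mulmxDl mxE. Qed.

Lemma dotmxZl p a (v w : 'cV[R]_p) : dotmx (a *: v) w = a * dotmx v w.
Proof. by rewrite /dotmx linearZ -scalemxAl mxE. Qed.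

Lemma dotmxDr p (u v w : 'cV[R]_p) : dotmx u (v + w) = dotmx u v + dotmx u w.
Proof. by rewrite dotmxC dotmxDl !(dotmxC u). Qed.

Lemma dotmxZr p a (v w : 'cV[R]_p) : dotmx v (a *: w) = a * dotmx v w.
Proof. by rewrite dotmxC dotmxZl dotmxC. Qed.

Lemma enormE p (v : 'cV[R]_p) : enorm v = Num.sqrt (dotmx v v).
Proof. by rewrite /enorm dotmxE; congr Num.sqrt; apply: eq_bigr => i _; rewrite expr2. Qed.

Lemma dotmx_ge0 p (v : 'cV[R]_p) : 0 <= dotmx v v.
Proof. by rewrite dotmxE; apply: sumr_ge0 => i _; rewrite -expr2 sqr_ge0. Qed.

Lemma enorm_ge0 p (v : 'cV[R]_p) : 0 <= enorm v.
Proof. exact: sqrtr_ge0. Qed.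

Lemma enorm_sqr p (v : 'cV[R]_p) : enorm v ^+ 2 = dotmx v v.
Proof. by rewrite enormE sqr_sqrtr ?dotmx_ge0. Qed.

Lemma enorm_eq0 p (v : 'cV[R]_p) : (enorm v == 0) = (v == 0).
Proof.
have sqr_ge0' (i : 'I_p) : 0 <= v i 0 ^+ 2 by exact: sqr_ge0.
have sum_ge0 : 0 <= \sum_(i < p) v i 0 ^+ 2 by exact: sumr_ge0.
rewrite /enorm sqrtr_eq0 le_eqVlt ltNge sum_ge0 orbF psumr_eq0 //.
apply/allP/eqP => [v0 | -> i _]; last by rewrite mxE expr0n eqxx.
apply/colP => i; rewrite mxE; apply/eqP.
by rewrite -sqrf_eq0; have /implyP -> := v0 i (mem_index_enum i).
Qed.

Lemma enorm_gt0 p (v : 'cV[R]_p) : (0 < enorm v) = (v != 0).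
Proof. by rewrite lt_def enorm_eq0 enorm_ge0 andbT. Qed.

Lemma enorm0 p : enorm (0 : 'cV[R]_p) = 0.
Proof. by apply/eqP; rewrite enorm_eq0. Qed.

Lemma enormZ p a (v : 'cV[R]_p) : enorm (a *: v) = `|a| * enorm v.
Proof.
by rewrite !enormE dotmxZl dotmxZr mulrA -expr2 sqrtrM ?sqr_ge0 // sqrtr_sqr.
Qed.

Lemma enormN p (v : 'cV[R]_p) : enorm (- v) = enorm v.
Proof. by rewrite -scaleN1r enormZ normrN1 mul1r. Qed.

Lemma dotmx_le_enorm p (v w : 'cV[R]_p) : dotmx v w <= enorm v * enorm w.
Proof.
have [w0 | wn0] := eqVneq w 0.
  by rewrite w0 enorm0 mulr0 dotmxE big1 // => i _; rewrite mxE mulr0.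
have [v0 | vn0] := eqVneq v 0.
  by rewrite v0 enorm0 mul0r dotmxE big1 // => i _; rewrite mxE mul0r.
have vw_gt0 : 0 < enorm v * enorm w by rewrite mulr_gt0 ?enorm_gt0.
have := dotmx_ge0 (enorm w *: v - enorm v *: w).
rewrite -scaleNr !(dotmxDl, dotmxDr, dotmxZl, dotmxZr) -!enorm_sqr (dotmxC w v) => h.
by rewrite -(ler_pM2l vw_gt0); nra.
Qed.

Lemma sqr_dotmx_le p (v w : 'cV[R]_p) : dotmx v w ^+ 2 <= dotmx v v * dotmx w w.
Proof.
have := dotmx_le_enorm (- v) w; rewrite -scaleN1r dotmxZl mulN1r scaleN1r enormN.
have := dotmx_le_enorm v w; rewrite -!enorm_sqr.
have := enorm_ge0 v; have := enorm_ge0 w; nra.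
Qed.

Lemma enormD p (v w : 'cV[R]_p) : enorm (v + w) <= enorm v + enorm w.
Proof.
rewrite -ler_sqr ?nnegrE ?addr_ge0 ?enorm_ge0 //.
rewrite enorm_sqr !(dotmxDl, dotmxDr) -!enorm_sqr (dotmxC w v).
have := dotmx_le_enorm v w; nra.
Qed.

Lemma lerB_enormD p (v w : 'cV[R]_p) : enorm v - enorm w <= enorm (v + w).
Proof. by have := enormD (v + w) (- w); rewrite addrK enormN; lra. Qed.

Lemma enorm_orthonormal_cols p q (Q : 'M[R]_(p, q)) (v : 'cV[R]_q) :
  orthonormal_cols Q -> enorm (Q *m v) = enorm v.
Proof. by move=> QtQ; rewrite !enormE /dotmx trmx_mul -mulmxA (mulmxA Q^T) QtQ mul1mx. Qed.

Lemma enorm_pythagoras p q r (Q : 'M[R]_(p, q)) (P : 'M[R]_(p, r)) (v : 'cV[R]_p) :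
  Q *m Q^T + P *m P^T = 1%:M ->
  enorm (Q^T *m v) ^+ 2 + enorm (P^T *m v) ^+ 2 = enorm v ^+ 2.
Proof.
move=> QP1; rewrite !enorm_sqr /dotmx !trmx_mul !trmxK -[in RHS](mulmx1 v^T) -QP1.
by rewrite mulmxDr mulmxDl !mulmxA [RHS]mxE.
Qed.

Lemma enorm_normalize p (v : 'cV[R]_p) : v != 0 -> enorm ((enorm v)^-1 *: v) = 1.
Proof.
by rewrite -enorm_gt0 => v_gt0; rewrite enormZ gtr0_norm ?invr_gt0 // mulVf ?gt_eqF.
Qed.

Definition frobenius p q (M : 'M[R]_(p, q)) : R :=
  \sum_(i < p) dotmx (row i M)^T (row i M)^T.

Lemma enorm_mulmx_le_frobenius p q (M : 'M[R]_(p, q)) (v : 'cV[R]_q) :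
  enorm (M *m v) <= Num.sqrt (frobenius M) * enorm v.
Proof.
have frob_ge0 : 0 <= frobenius M by apply: sumr_ge0 => i _; exact: dotmx_ge0.
rewrite !enormE -sqrtrM // ler_sqrt ?mulr_ge0 ?dotmx_ge0 //.
rewrite dotmxE /frobenius mulr_suml; apply: ler_sum => i _.
have -> : (M *m v) i 0 = dotmx (row i M)^T v by rewrite /dotmx trmxK -row_mul [RHS]mxE.
by rewrite -expr2 sqr_dotmx_le.
Qed.

Lemma enorm_mulmx_le_specnorm p q (M : 'M[R]_(p, q)) (v : 'cV[R]_q) :
  enorm (M *m v) <= specnorm M * enorm v.
Proof.
have [-> | vn0] := eqVneq v 0; first by rewrite mulmx0 !enorm0 mulr0.
have v_gt0 : 0 < enorm v by rewrite enorm_gt0.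
have ub : has_ubound [set enorm (M *m w) | w in [set w | enorm w = 1]].
  exists (Num.sqrt (frobenius M)) => _ [w /= w1 <-].
  by have := enorm_mulmx_le_frobenius M w; rewrite w1 mulr1.
have := ub_le_sup ub (ex_intro2 _ _ _ (enorm_normalize vn0) erefl).
by rewrite -scalemxAr enormZ gtr0_norm ?invr_gt0 // ler_pdivrMl // mulrC.
Qed.

Lemma enorm_mulmx_ge_sigma_min p (M : 'M[R]_p) (v : 'cV[R]_p) :
  sigma_min M * enorm v <= enorm (M *m v).
Proof.
have [-> | vn0] := eqVneq v 0; first by rewrite mulmx0 !enorm0 mulr0.
have v_gt0 : 0 < enorm v by rewrite enorm_gt0.
have lb : has_lbound [set enorm (M *m w) | w in [set w | enorm w = 1]].
  by exists 0 => _ [w _ <-]; exact: enorm_ge0.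
have := ge_inf lb (ex_intro2 _ _ _ (enorm_normalize vn0) erefl).
by rewrite -scalemxAr enormZ gtr0_norm ?invr_gt0 // ler_pdivlMl // mulrC.
Qed.

Lemma cV_neq0 q : (0 < q)%N -> exists v : 'cV[R]_q, v != 0.
Proof.
move=> q_gt0; exists (const_mx 1); apply/eqP => /colP /(_ (Ordinal q_gt0)).
by rewrite !mxE; apply/eqP; rewrite oner_eq0.
Qed.

Lemma specnorm_ge0 p q (M : 'M[R]_(p, q)) : (0 < q)%N -> 0 <= specnorm M.
Proof.
move=> /cV_neq0 [v vn0]; have v_gt0 : 0 < enorm v by rewrite enorm_gt0.
by rewrite -(pmulr_lge0 _ v_gt0) (le_trans (enorm_ge0 _) (enorm_mulmx_le_specnorm M v)).
Qed.

Lemma sigma_min_ge0 p (M : 'M[R]_p) : (0 < p)%N -> 0 <= sigma_min M.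
Proof.
move=> /cV_neq0 [v vn0]; apply: lb_le_inf => [|_ [w _ <-]]; last exact: enorm_ge0.
by exists (enorm (M *m ((enorm v)^-1 *: v))), ((enorm v)^-1 *: v) => //=; exact: enorm_normalize.
Qed.

End EuclideanNorm.

Section ColumnSpaces.
Set Implicit Arguments. Unset Strict Implicit.
Variable F : fieldType.

Lemma colspan_mulmx_stable p q (A : 'M[F]_p) (W : 'M[F]_(p, q)) D z :
  A *m W = W *m D -> colspan W z -> colspan W (A *m z).
Proof. by move=> AW [c ->]; exists (D *m c); rewrite !mulmxA AW. Qed.

Lemma colspan_orthogonal_trmx_mul p q r (Q : 'M[F]_(p, q)) (P : 'M[F]_(p, r)) :
  (forall z, colspan P z -> forall y, colspan Q y -> y^T *m z = 0) -> Q^T *m P = 0.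
Proof.
move=> QP; apply/matrixP => i j.
have /matrixP/(_ 0 0) := QP _ (ex_intro _ (delta_mx j 0) erefl) _ (ex_intro _ (delta_mx i 0) erefl).
by rewrite trmx_mul trmx_delta mulmxA -(mulmxA (delta_mx 0 i)) -rowE -colE !mxE.
Qed.

Variables (k m : nat) (A V : 'M[F]_(k + m)) (lam : 'rV[F]_(k + m)).
Hypotheses (V_unit : V \in unitmx) (AE : A = V *m diag_mx lam *m invmx V).

Let AV : A *m V = V *m diag_mx lam.
Proof. by rewrite AE mulmxKV. Qed.

Let AV_blocks : A *m V = row_mx (lsubmx V *m diag_mx (lsubmx lam))
                                (rsubmx V *m diag_mx (rsubmx lam)).
Proof.
rewrite AV -[V in V *m _]hsubmxK -[lam]hsubmxK diag_mx_row mul_row_block.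
by rewrite !mulmx0 addr0 add0r !hsubmxK.
Qed.

Lemma diagonalized_mulmx_lsubmx : A *m lsubmx V = lsubmx V *m diag_mx (lsubmx lam).
Proof. by rewrite mulmx_lsub AV_blocks row_mxKl. Qed.

Lemma diagonalized_mulmx_rsubmx : A *m rsubmx V = rsubmx V *m diag_mx (rsubmx lam).
Proof. by rewrite mulmx_rsub AV_blocks row_mxKr. Qed.

Lemma colspan_lsubmx_rsubmx_eq0 (z : 'cV[F]_(k + m)) :
  colspan (lsubmx V) z -> colspan (rsubmx V) z -> z = 0.
Proof.
move=> [c ->] [d cd]; have : V *m col_mx c 0 = V *m col_mx 0 d.
  by rewrite -[V]hsubmxK !mul_row_col !mulmx0 addr0 add0r cd.
by move/(congr1 (mulmx (invmx V))); rewrite !mulKmx // => /eq_col_mx [-> _]; rewrite mulmx0.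
Qed.

End ColumnSpaces.

Section RealInvariantSubspaces.
Set Implicit Arguments. Unset Strict Implicit.
Variable R : realType.

Lemma cplx_mulmx p q r (M : 'M[R]_(p, q)) (N : 'M[R]_(q, r)) :
  cplx (M *m N) = cplx M *m cplx N.
Proof. exact: map_mxM. Qed.

Lemma cplx_inj p q : injective (@cplx R p q).
Proof. exact: (@map_mx_inj _ _ (real_complex R)). Qed.

Lemma colspan_cplx_stable p q r (Q : 'M[R]_(p, q)) (A : 'M[R]_p)
    (W : 'M[R[i]]_(p, r)) (D : 'M[R[i]]_r) :
  (forall y, colspan Q y <-> colspan W (cplx y)) -> cplx A *m W = W *m D ->
  forall y, colspan Q y -> colspan Q (A *m y).
Proof.
move=> QW AW y /QW Wy; apply/QW; rewrite cplx_mulmx.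
exact: colspan_mulmx_stable AW Wy.
Qed.

Lemma orthonormal_cols_inj p q r (Q : 'M[R]_(p, q)) :
  orthonormal_cols Q -> injective (@mulmx R p q r Q).
Proof. by move=> QtQ c d /(congr1 (mulmx Q^T)); rewrite !mulmxA QtQ !mul1mx. Qed.

Lemma mulmx_orthonormal_stable p q (Q : 'M[R]_(p, q)) (A : 'M[R]_p) (c : 'cV[R]_q) :
  orthonormal_cols Q -> (forall y, colspan Q y -> colspan Q (A *m y)) ->
  A *m (Q *m c) = Q *m (Q^T *m A *m Q *m c).
Proof.
move=> QtQ QA; have [d Ed] := QA (Q *m c) (ex_intro _ c erefl).
by rewrite -!mulmxA Ed (mulmxA Q^T) QtQ mul1mx.
Qed.

Lemma enorm_compression_le p q (Q : 'M[R]_(p, q)) (A : 'M[R]_p) (c : 'cV[R]_q) :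
  orthonormal_cols Q -> (forall y, colspan Q y -> colspan Q (A *m y)) ->
  enorm (Q^T *m A *m Q *m c) <= specnorm A * enorm c.
Proof.
move=> Qo QA; rewrite -(enorm_orthonormal_cols _ Qo) -mulmx_orthonormal_stable //.
by rewrite -(enorm_orthonormal_cols c Qo) enorm_mulmx_le_specnorm.
Qed.

Lemma unitmx_row_mx_orthonormal k m (Q1 : 'M[R]_(k + m, k)) (Q2 : 'M[R]_(k + m, m)) :
  orthonormal_cols Q1 -> orthonormal_cols Q2 ->
  (forall y, colspan Q1 y -> colspan Q2 y -> y = 0) -> row_mx Q1 Q2 \in unitmx.
Proof.
move=> Q1o Q2o Q12; rewrite -unitmx_tr -row_free_unit; apply: inj_row_free => v.
move/(congr1 trmx); rewrite trmx_mul trmxK trmx0 -[v^T]vsubmxK mul_row_col => /eqP.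
rewrite addr_eq0 -mulmxN => /eqP Q12E.
have Q1u0 : Q1 *m usubmx v^T = 0 by apply: Q12; [exists (usubmx v^T) | exists (- dsubmx v^T)].
have u0 : usubmx v^T = 0 by apply: (orthonormal_cols_inj Q1o); rewrite Q1u0 mulmx0.
have d0 : dsubmx v^T = 0.
  by apply: (orthonormal_cols_inj Q2o); rewrite -[dsubmx _]opprK mulmxN -Q12E Q1u0 oppr0 mulmx0.
by apply: trmx_inj; rewrite trmx0 -[v^T]vsubmxK u0 d0 col_mx0.
Qed.

End RealInvariantSubspaces.

Section ObliqueCoordinates.
Set Implicit Arguments. Unset Strict Implicit.
Variables (R : realType) (k m : nat).
Variables (Q1 : 'M[R]_(k + m, k)) (P2 Q2 : 'M[R]_(k + m, m)).
Hypotheses (Q1o : orthonormal_cols Q1) (P2o : orthonormal_cols P2).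
Hypotheses (Q2o : orthonormal_cols Q2) (Q1P2 : Q1^T *m P2 = 0).
Hypothesis T_unit : row_mx Q1 Q2 \in unitmx.

Local Notation R1 := (usubmx (invmx (row_mx Q1 Q2))).
Local Notation R2 := (dsubmx (invmx (row_mx Q1 Q2))).

Let P2Q1 : P2^T *m Q1 = 0.
Proof. by rewrite -[Q1]trmxK -trmx_mul Q1P2 trmx0. Qed.

Lemma orthonormal_complement : Q1 *m Q1^T + P2 *m P2^T = 1%:M.
Proof.
have W1 : (row_mx Q1 P2)^T *m row_mx Q1 P2 = 1%:M.
  by rewrite tr_row_mx mul_col_row Q1o P2o Q1P2 P2Q1 -scalar_mx_block.
by have := mulmx1C W1; rewrite tr_row_mx mul_row_col.
Qed.

Let enorm_Q1t_le (y : 'cV[R]_(k + m)) : enorm (Q1^T *m y) <= enorm y.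
Proof.
rewrite -ler_sqr ?nnegrE ?enorm_ge0 // -(enorm_pythagoras y orthonormal_complement).
by rewrite lerDl sqr_ge0.
Qed.

Let enorm_P2t_le (y : 'cV[R]_(k + m)) : enorm (P2^T *m y) <= enorm y.
Proof.
rewrite -ler_sqr ?nnegrE ?enorm_ge0 // -(enorm_pythagoras y orthonormal_complement).
by rewrite lerDr sqr_ge0.
Qed.

Lemma oblique_decomposition (y : 'cV[R]_(k + m)) : Q1 *m (R1 *m y) + Q2 *m (R2 *m y) = y.
Proof. by rewrite -mul_row_col mul_usub_mx mul_dsub_mx vsubmxK mulKVmx. Qed.

Let oblique_coords (a : 'cV[R]_k) (b : 'cV[R]_m) :
  invmx (row_mx Q1 Q2) *m (Q1 *m a + Q2 *m b) = col_mx a b.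
Proof. by rewrite -mul_row_col mulKmx. Qed.

Lemma oblique_coord1 (a : 'cV[R]_k) (b : 'cV[R]_m) : R1 *m (Q1 *m a + Q2 *m b) = a.
Proof. by rewrite mul_usub_mx oblique_coords col_mxKu. Qed.

Lemma oblique_coord2 (a : 'cV[R]_k) (b : 'cV[R]_m) : R2 *m (Q1 *m a + Q2 *m b) = b.
Proof. by rewrite mul_dsub_mx oblique_coords col_mxKd. Qed.

Lemma enorm_le_oblique (y : 'cV[R]_(k + m)) : enorm y <= enorm (R1 *m y) + enorm (R2 *m y).
Proof.
rewrite -{1}(oblique_decomposition y) -(enorm_orthonormal_cols (R1 *m y) Q1o).
by rewrite -(enorm_orthonormal_cols (R2 *m y) Q2o) enormD.
Qed.

Lemma enorm_ge_oblique (y : 'cV[R]_(k + m)) : enorm (R1 *m y) - enorm (R2 *m y) <= enorm y.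
Proof.
rewrite -{3}(oblique_decomposition y) -(enorm_orthonormal_cols (R1 *m y) Q1o).
by rewrite -(enorm_orthonormal_cols (R2 *m y) Q2o) lerB_enormD.
Qed.

Variable A : 'M[R]_(k + m).
Hypothesis stable1 : forall y, colspan Q1 y -> colspan Q1 (A *m y).
Hypothesis stable2 : forall y, colspan Q2 y -> colspan Q2 (A *m y).

Lemma oblique_coord1_mulmx (y : 'cV[R]_(k + m)) :
  R1 *m (A *m y) = Q1^T *m A *m Q1 *m (R1 *m y).
Proof.
rewrite -{1}(oblique_decomposition y) mulmxDr (mulmx_orthonormal_stable _ Q1o stable1).
by rewrite (mulmx_orthonormal_stable _ Q2o stable2) oblique_coord1.
Qed.

Lemma oblique_coord2_mulmx (y : 'cV[R]_(k + m)) :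
  R2 *m (A *m y) = Q2^T *m A *m Q2 *m (R2 *m y).
Proof.
rewrite -{1}(oblique_decomposition y) mulmxDr (mulmx_orthonormal_stable _ Q1o stable1).
by rewrite (mulmx_orthonormal_stable _ Q2o stable2) oblique_coord2.
Qed.

Variable xi : R.
Hypotheses (xi_ge0 : 0 <= xi) (xi_lt1 : xi < 1).
Hypothesis close : 1 - xi <= sigma_min (P2^T *m Q2).

Lemma enorm_coord2_le (y : 'cV[R]_(k + m)) : enorm (R2 *m y) <= enorm y / (1 - xi).
Proof.
have xi1 : 0 < 1 - xi by rewrite subr_gt0.
rewrite ler_pdivlMr // mulrC; apply: le_trans (enorm_P2t_le y).
have -> : P2^T *m y = P2^T *m Q2 *m (R2 *m y).
  by rewrite -{1}(oblique_decomposition y) mulmxDr !mulmxA P2Q1 !mul0mx add0r.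
apply: le_trans (enorm_mulmx_ge_sigma_min _ _).
by rewrite ler_wpM2r ?enorm_ge0.
Qed.

Lemma enorm_Q1tQ2_le (b : 'cV[R]_m) :
  enorm (Q1^T *m (Q2 *m b)) <= Num.sqrt (2 * xi) * enorm b.
Proof.
have xi1 : 0 <= 1 - xi by rewrite subr_ge0 ltW.
have sigma_b : ((1 - xi) * enorm b) ^+ 2 <= enorm (P2^T *m (Q2 *m b)) ^+ 2.
  rewrite ler_sqr ?nnegrE ?mulr_ge0 ?enorm_ge0 // mulmxA.
  by apply: le_trans (enorm_mulmx_ge_sigma_min _ _); rewrite ler_wpM2r ?enorm_ge0.
have := enorm_pythagoras (Q2 *m b) orthonormal_complement.
rewrite [enorm (Q2 *m b)]enorm_orthonormal_cols // => pyth.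
rewrite -ler_sqr ?nnegrE ?mulr_ge0 ?sqrtr_ge0 ?enorm_ge0 //.
rewrite exprMn [Num.sqrt (2 * xi) ^+ 2]sqr_sqrtr ?mulr_ge0 //.
have := sqr_ge0 (xi * enorm b); rewrite !exprMn in sigma_b *; nra.
Qed.

Lemma enorm_coord1_le (y : 'cV[R]_(k + m)) :
  enorm (R1 *m y) <= (1 + Num.sqrt (2 * xi) / (1 - xi)) * enorm y.
Proof.
have -> : R1 *m y = Q1^T *m y - Q1^T *m (Q2 *m (R2 *m y)).
  by rewrite -{2}(oblique_decomposition y) mulmxDr mulmxA Q1o mul1mx addrK.
apply: le_trans (enormD _ _) _; rewrite enormN mulrDl mul1r lerD ?enorm_Q1t_le //.
apply: le_trans (enorm_Q1tQ2_le _) _.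
by rewrite -mulrA ler_wpM2l ?sqrtr_ge0 // mulrC enorm_coord2_le.
Qed.

Lemma enorm_coord2_step_le r (B : 'M[R]_(k + m, r)) (b : 'cV[R]_m) (u : 'cV[R]_r) :
  enorm (Q2^T *m A *m Q2 *m b + R2 *m (B *m u))
    <= specnorm A * enorm b + specnorm B * enorm u / (1 - xi).
Proof.
have xi1 : 0 < 1 - xi by rewrite subr_gt0.
apply: le_trans (enormD _ _) _; apply: lerD; first exact: enorm_compression_le.
apply: le_trans (enorm_coord2_le _) _.
by rewrite ler_pM2r ?invr_gt0 ?enorm_mulmx_le_specnorm.
Qed.

Lemma enorm_coord1_step_ge r (B : 'M[R]_(k + m, r)) (a : 'cV[R]_k) (u : 'cV[R]_r) :
  sigma_min (Q1^T *m A *m Q1) * enorm a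
      - (1 + Num.sqrt (2 * xi) / (1 - xi)) * specnorm B * enorm u
    <= enorm (Q1^T *m A *m Q1 *m a + R1 *m (B *m u)).
Proof.
have c1_ge0 : 0 <= 1 + Num.sqrt (2 * xi) / (1 - xi).
  by rewrite addr_ge0 ?divr_ge0 ?sqrtr_ge0 ?subr_ge0 ?ltW.
apply: le_trans (lerB_enormD _ _); rewrite -mulrA lerB ?enorm_mulmx_ge_sigma_min //.
apply: le_trans (enorm_coord1_le _) _.
by apply: ler_wpM2l => //; exact: enorm_mulmx_le_specnorm.
Qed.

End ObliqueCoordinates.

Lemma cone_ratio_bound {R : realFieldType} {s NA NB c1 d g gp na nb nx nu alpha la lb : R} :
  0 < d -> d <= 1 -> 0 < g -> 1 < gp -> 0 <= s -> 0 <= NA -> 0 <= NB -> 0 <= c1 ->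
  0 <= nb -> 0 <= nu -> gp * nb < na -> nx <= na + nb -> na - nb <= nx ->
  nu <= alpha * nx ->
  alpha < (gp / (gp + 1) * s - g / (gp - 1) * (1 / d) * NA) / ((c1 + g / d) * NB) ->
  lb <= NA * nb + NB * nu / d -> s * na - c1 * NB * nu <= la ->
  g * lb < la.
Proof.
move=> d_gt0 d_le1 g_gt0 gp_gt1 s_ge0 NA_ge0 NB_ge0 c1_ge0 nb_ge0 nu_ge0.
move=> cone_x nx_le nx_ge nu_le; rewrite div1r.
set t := d^-1; set p1 := gp / (gp + 1); set p2 := g / (gp - 1).
rewrite -[g / d]/(g * t) -[NB * nu / d]/(NB * nu * t) => alpha_lt lb_le la_ge.
have t_ge1 : 1 <= t by rewrite invf_ge1.
have nx_gt0 : 0 < nx by nra.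
have p1_nx : p1 * nx <= na.
  have : gp * nx <= gp * (na + nb) by apply: ler_wpM2l => //; lra.
  by rewrite /p1 mulrAC ler_pdivrMr; lra.
have p2_nx : g * nb <= p2 * nx.
  have : (gp - 1) * nb <= nx by lra.
  by rewrite /p2 mulrAC ler_pdivlMr ?subr_gt0 // -mulrA ler_pM2l // mulrC.
have p2_ge0 : 0 <= p2 by rewrite divr_ge0 ?subr_ge0 ?ltW.
set den := (c1 + g * t) * NB in alpha_lt.
have den_nu : den * nu < (p1 * s - p2 * t * NA) * nx.
  have [den0 | den_neq0] := eqVneq den 0.
    (* then alpha < 0, since x / 0 = 0 *)
    by move: alpha_lt; rewrite den0 invr0 mulr0; nra.
  have den_gt0 : 0 < den by rewrite lt_def den_neq0 mulr_ge0 //; nra.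
  rewrite ltr_pdivlMr // in alpha_lt.
  have : den * nu <= den * (alpha * nx) by rewrite ler_pM2l.
  have : alpha * den * nx < (p1 * s - p2 * t * NA) * nx by rewrite ltr_pM2r.
  nra.
have p2NA_ge0 : 0 <= p2 * nx * NA.
  by apply: mulr_ge0 => //; apply: mulr_ge0 => //; exact: ltW.
have NA_nb := ler_wpM2r NA_ge0 p2_nx.
have t_NA := ler_peMr p2NA_ge0 t_ge1.
have s_na : p1 * s * nx <= s * na by nra.
rewrite /den in den_nu; nra.
Qed.

Theorem mainTheorem11 (R : realType) (k m : nat) (hk : (0 < k)%N) (hm : (0 < m)%N)
  (A : 'M[R]_(k + m))
  (* spectral assumption: A = V diag(lam) V^{-1} over C, first k eigenvalues
     of modulus > 1, last m of modulus < 1 *)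
  (V : 'M[R[i]]_(k + m)) (lam : 'rV[R[i]]_(k + m))
  (hV : V \in unitmx)
  (hAV : cplx A = V *m diag_mx lam *m invmx V)
  (hlu : forall i : 'I_k, 1 < `|lam 0 (lshift m i)|)
  (hls : forall j : 'I_m, `|lam 0 (rshift k j)| < 1)
  (* P1 = Q1 : orthonormal basis of E_u *)
  (Q1 : 'M[R]_(k + m, k))
  (hQ1o : orthonormal_cols Q1)
  (hQ1 : forall x : 'cV[R]_(k + m),
      colspan Q1 x <-> colspan (lsubmx V) (cplx x))
  (* P2 : orthonormal basis of E_u^perp *)
  (P2 : 'M[R]_(k + m, m))
  (hP2o : orthonormal_cols P2)
  (hP2 : forall x : 'cV[R]_(k + m),
      colspan P2 x <-> (forall y : 'cV[R]_(k + m), colspan Q1 y -> y^T *m x = 0))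
  (* Q2 : orthonormal basis of E_s *)
  (Q2 : 'M[R]_(k + m, m))
  (hQ2o : orthonormal_cols Q2)
  (hQ2 : forall x : 'cV[R]_(k + m),
      colspan Q2 x <-> colspan (rsubmx V) (cplx x))
  (B : 'M[R]_(k + m, k))
  (xi : R) (hxi0 : 0 < xi) (hxi1 : xi < 1)
  (hclose : 1 - xi < sigma_min (P2^T *m Q2))
  (gam gamp : R) (hgam : 0 < gam) (hgamp : 1 < gamp)
  (x : 'cV[R]_(k + m))
  (hx : gamp * enorm (dsubmx (invmx (row_mx Q1 Q2)) *m x)
        < enorm (usubmx (invmx (row_mx Q1 Q2)) *m x))
  (u : 'cV[R]_k) (alpha : R)
  (hu : enorm u <= alpha * enorm x)
  (halpha : alpha <
     (gamp / (gamp + 1) * sigma_min (Q1^T *m A *m Q1)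
       - gam / (gamp - 1) * (1 / (1 - xi)) * specnorm A)
     / ((1 + Num.sqrt (2 * xi) / (1 - xi) + gam / (1 - xi)) * specnorm B)) :
  let x' := A *m x + B *m u in
  gam * enorm (dsubmx (invmx (row_mx Q1 Q2)) *m x')
    < enorm (usubmx (invmx (row_mx Q1 Q2)) *m x').
Proof.
cbv zeta.
have Q1P2 := colspan_orthogonal_trmx_mul (fun z P2z => proj1 (hP2 z) P2z).
have stable1 := colspan_cplx_stable hQ1 (diagonalized_mulmx_lsubmx hV hAV).
have stable2 := colspan_cplx_stable hQ2 (diagonalized_mulmx_rsubmx hV hAV).
have T_unit : row_mx Q1 Q2 \in unitmx.
  apply: unitmx_row_mx_orthonormal => // y /hQ1 Vy /hQ2 Wy; apply: cplx_inj.
  by rewrite (colspan_lsubmx_rsubmx_eq0 hV Vy Wy) [RHS]map_mx0.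
have xi1 : 0 < 1 - xi by rewrite subr_gt0.
have c1_ge0 : 0 <= 1 + Num.sqrt (2 * xi) / (1 - xi).
  by rewrite addr_ge0 ?divr_ge0 ?sqrtr_ge0 ?ltW.
rewrite !mulmxDr oblique_coord1_mulmx ?oblique_coord2_mulmx //.
apply: (cone_ratio_bound xi1 _ hgam hgamp _ _ _ c1_ge0 _ _ hx _ _ hu halpha).
- by rewrite lerBlDr lerDl ltW.
- exact: sigma_min_ge0.
- by apply: specnorm_ge0; rewrite addn_gt0 hk.
- exact: specnorm_ge0.
- exact: enorm_ge0.
- exact: enorm_ge0.
- exact: enorm_le_oblique.
- exact: enorm_ge_oblique.
- exact: (enorm_coord2_step_le hQ1o hP2o hQ2o Q1P2 T_unit stable2 hxi1 (ltW hclose)).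
- exact: (enorm_coord1_step_ge hQ1o hP2o hQ2o Q1P2 T_unit A (ltW hxi0) hxi1 (ltW hclose)).
Qed.
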